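(* A nonnegative random variable $X$ with survival function $\overline{F}(x) = \mathbb{P}(X>x)$ is completely subscalable if and only if the function $h(x) := x \, \overline{F}(x)$ is increasing (non-decreasing) on $(0, \infty)$.
   Context: A nonnegative random variable $X$ with survival function $\overline{F}$ is called completely subscalable if $\theta \, \overline{F}(x) \leq \overline{F}(x/\theta)$ for all $x \geq 0$ and all $\theta \in (0,1)$. *)

From HB Require Import structures.
From mathcomp Require Import all_boot all_order all_algebra.
From mathcomp Require Import all_classical all_reals all_analysis.
Set Implicit Arguments. Unset Strict Implicit. Unset Printing Implicit Defensive.
Import Order.TTheory GRing.Theory Num.Theory.
Local Open Scope classical_set_scope.
Local Open Scope ring_scope.

Definition survival (d : measure_display) (T : measurableType d) (R : realType)
  (P : probability T R) (X : {RV P >-> R}) (x : R) : R :=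
  fine (P [set w | x < X w]).

Definition completely_subscalable (d : measure_display) (T : measurableType d)
  (R : realType) (P : probability T R) (X : {RV P >-> R}) : Prop :=
  forall (x theta : R), 0 <= x -> 0 < theta -> theta < 1 ->
    theta * survival X x <= survival X (x / theta).

From HB Require Import structures.
From mathcomp Require Import all_boot all_order all_algebra.
From mathcomp Require Import all_classical all_reals all_analysis.
Import Order.TTheory GRing.Theory Num.Theory.
Local Open Scope classical_set_scope.
Local Open Scope ring_scope.

(* Both conditions compare x Fbar(x) with y Fbar(y) for 0 < x <= y: putting
   theta = x / y turns theta Fbar(x) <= Fbar(x / theta) into
   x Fbar(x) <= y Fbar(y), and conversely.  The point x = 0 is the only one
   not covered by this change of variables; there the subscalability
   inequality reduces to theta Fbar(0) <= Fbar(0), true since Fbar >= 0. *)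

Section ScaledMonotonicity.
Variables (R : realType) (S : R -> R).

Definition subscalable_fun : Prop :=
  forall x theta : R, 0 <= x -> 0 < theta -> theta < 1 ->
    theta * S x <= S (x / theta).

Definition scaled_nondecreasing : Prop :=
  forall x y : R, 0 < x -> x <= y -> x * S x <= y * S y.

Lemma scaled_nondecreasing_of_subscalable :
  subscalable_fun -> scaled_nondecreasing.
Proof.
move=> subS x y x_gt0 le_xy; have y_gt0 : 0 < y := lt_le_trans x_gt0 le_xy.
move: le_xy; rewrite le_eqVlt => /predU1P[-> // | lt_xy].
have theta_lt1 : x / y < 1 by rewrite ltr_pdivrMr // mul1r.
have := subS x (x / y) (ltW x_gt0) (divr_gt0 x_gt0 y_gt0) theta_lt1.
rewrite invf_div mulrCA divff ?gt_eqF // mulr1 -(ler_pM2l y_gt0).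
by rewrite mulrA mulrCA divff ?gt_eqF // mulr1.
Qed.

Lemma subscalable_of_scaled_nondecreasing :
  0 <= S 0 -> scaled_nondecreasing -> subscalable_fun.
Proof.
move=> S0_ge0 incrS x theta x_ge0 theta_gt0 theta_lt1.
move: x_ge0; rewrite le_eqVlt => /predU1P[<- | x_gt0].
  by rewrite mul0r ler_piMl // ltW.
have le_x_xtheta : x <= x / theta by rewrite ler_pdivlMr // ler_piMr // ltW.
rewrite -(ler_pM2l (divr_gt0 x_gt0 theta_gt0)) mulrA divfK ?lt0r_neq0 //.
exact: incrS.
Qed.

End ScaledMonotonicity.

Lemma survival_ge0 (d : measure_display) (T : measurableType d) (R : realType)
  (P : probability T R) (X : {RV P >-> R}) (x : R) : 0 <= survival X x.
Proof. by rewrite /survival fine_ge0 // measure_ge0. Qed.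

Theorem lemma6 (d : measure_display) (T : measurableType d) (R : realType)
  (P : probability T R) (X : {RV P >-> R})
  (X_nonneg : forall w, 0 <= X w) :
  completely_subscalable X <->
  (forall x y : R, 0 < x -> x <= y -> x * survival X x <= y * survival X y).
Proof.
split; first exact: scaled_nondecreasing_of_subscalable.
exact/subscalable_of_scaled_nondecreasing/survival_ge0.
Qed.
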